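(* Let $C(\cdot,t)$, $t\in(-\infty,+\infty)$, be a solution by closed convex smooth embedded curves of the flow $$\frac{\partial C(p,t)}{\partial t}=\Big(\lambda+\int_0^{\xi(p)}\varphi\,d\xi\Big)C+\frac{\varphi}{2}C_\xi$$ ($\lambda$ a real constant) whose centro-affine curvature $\varphi$ is uniformly bounded on $S^1\times(-\infty,+\infty)$. Then $E(t)=\oint_{C(\cdot,t)}\varphi^2\,d\xi$ satisfies $\lim_{t\to-\infty}E(t)=0$.
   Context: For $u,v\in\mathbb{R}^2$, $[u,v]$ denotes the determinant of the matrix with columns $u,v$. Each curve $C(\cdot,t):S^1\to\mathbb{R}^2$ is smooth, closed, with $[C,C_p]\neq0$, $[C_p,C_{pp}]\neq0$ (then $[C_p,C_{pp}]/[C,C_p]>0$). The centro-affine metric is $g=\sqrt{[C_p,C_{pp}]/[C,C_p]}$, centro-affine arc-length $\xi(p)=\int_{p_0}^p g\,dp$ (so $d\xi=g\,dp$), and centro-affine curvature $\varphi=[C_{\xi\xi},C]/[C_\xi,C]$. *)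

From Stdlib Require Import Reals.
From Coquelicot Require Import Coquelicot.
Open Scope R_scope.

(* A planar family of curves C(p,t) = (X p t, Y p t), p the curve parameter
   (S^1 = R/Z, i.e. period 1), t the time. *)

Definition dp (f : R -> R -> R) : R -> R -> R :=
  fun p t => Derive (fun q => f q t) p.
Definition dt (f : R -> R -> R) : R -> R -> R :=
  fun p t => Derive (fun s => f p s) t.

Fixpoint Ck (n : nat) (f : R -> R -> R) : Prop :=
  (forall p t, continuous (fun z : R * R => f (fst z) (snd z)) (p, t)) /\
  match n with
  | O => True
  | S m => (forall p t, ex_derive (fun q => f q t) p /\ ex_derive (fun s => f p s) t)
           /\ Ck m (dp f) /\ Ck m (dt f)
  end.

Definition smooth2 (f : R -> R -> R) : Prop := forall n, Ck n f.

Definition det2 (u1 u2 v1 v2 : R) : R := u1 * v2 - u2 * v1.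

Section Curve.
Variables X Y : R -> R -> R.

Definition Xp := dp X.  Definition Yp := dp Y.
Definition Xpp := dp Xp. Definition Ypp := dp Yp.

(* centro-affine metric g = sqrt([C_p,C_pp]/[C,C_p]) *)
Definition cag (p t : R) : R :=
  sqrt (det2 (Xp p t) (Yp p t) (Xpp p t) (Ypp p t)
        / det2 (X p t) (Y p t) (Xp p t) (Yp p t)).

(* d/dxi = (1/g) d/dp *)
Definition Xxi (p t : R) : R := Xp p t / cag p t.
Definition Yxi (p t : R) : R := Yp p t / cag p t.
Definition Xxixi (p t : R) : R := dp Xxi p t / cag p t.
Definition Yxixi (p t : R) : R := dp Yxi p t / cag p t.

(* centro-affine curvature phi = [C_xixi, C]/[C_xi, C] *)
Definition caphi (p t : R) : R :=
  det2 (Xxixi p t) (Yxixi p t) (X p t) (Y p t)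
  / det2 (Xxi p t) (Yxi p t) (X p t) (Y p t).

(* E(t) = \oint phi^2 dxi = \int_0^1 phi^2 g dp *)
Definition caE (t : R) : R :=
  RInt (fun p => caphi p t ^ 2 * cag p t) 0 1.

(* \int_0^{xi(p)} phi dxi, with xi(p0) = 0, i.e. \int_{p0}^p phi g dp *)
Definition cumphi (p0 p t : R) : R :=
  RInt (fun q => caphi q t * cag q t) p0 p.

End Curve.

Definition closed_embedded (X Y : R -> R -> R) : Prop :=
  (forall p t, X (p + 1) t = X p t /\ Y (p + 1) t = Y p t) /\
  (forall p q t, 0 <= p < 1 -> 0 <= q < 1 ->
     X p t = X q t -> Y p t = Y q t -> p = q).

(* convexity: for each p, the whole curve C(.,t) lies in one closed half-plane
   bounded by the tangent line at C(p,t) *)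
Definition convex_curves (X Y : R -> R -> R) : Prop :=
  forall p t,
    (forall q, 0 <= det2 (Xp X p t) (Yp Y p t) (X q t - X p t) (Y q t - Y p t)) \/
    (forall q, det2 (Xp X p t) (Yp Y p t) (X q t - X p t) (Y q t - Y p t) <= 0).

Definition nondegenerate (X Y : R -> R -> R) : Prop :=
  forall p t,
    det2 (X p t) (Y p t) (Xp X p t) (Yp Y p t) <> 0 /\
    det2 (Xp X p t) (Yp Y p t) (Xpp X p t) (Ypp Y p t) <> 0.

(* the flow C_t = (lambda + \int_0^{xi(p)} phi dxi) C + (phi/2) C_xi,
   on one period p in [p0, p0+1) *)
Definition ca_flow (lam p0 : R) (X Y : R -> R -> R) : Prop :=
  forall p t, p0 <= p < p0 + 1 ->
    dt X p t = (lam + cumphi X Y p0 p t) * X p t + caphi X Y p t / 2 * Xxi X Y p t /\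
    dt Y p t = (lam + cumphi X Y p0 p t) * Y p t + caphi X Y p t / 2 * Yxi X Y p t.

From Stdlib Require Import Reals Lra Classical.
From Coquelicot Require Import Coquelicot.
Open Scope R_scope.

(* Let g = sqrt ([C_p,C_pp]/[C,C_p]) be the centro-affine metric.  Along the flow it evolves
   by g_t = phi^2 g / 2, so the centro-affine length L(t) = \oint g dp satisfies L' = E/2 >= 0
   and L >= 0.  Differentiating the energy density phi^2 g in t and integrating by parts over
   the closed curve gives
     E' = 4 E - 1/2 \oint phi^4 dxi - \oint phi_xi^2 dxi <= 4 E.
   Backward Gronwall then gives E(u) >= e^(4(u-s)) E(s) for u <= s, hence
   L(s) - L(s-1) >= c E(s) with c > 0.  As L is monotone and bounded below, the left-hand
   side tends to 0 when s -> -oo, and so does E.  Since [C_p,C_pp]/[C,C_p] never vanishes it has a constant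
   sign; when it is negative, sqrt returns 0, so g and E vanish identically. *)

(** * Joint smoothness in (p, t) *)

Lemma Ck_continuous n f p t : Ck n f -> continuous (fun z : R * R => f (fst z) (snd z)) (p, t).
Proof. destruct n; intros [Hc _]; apply Hc. Qed.

Lemma Ck_weaken n f : Ck (S n) f -> Ck n f.
Proof.
  revert f; induction n as [|n IH]; intros f [Hc [Hd [Hp Ht]]].
  - split; [exact Hc | exact I].
  - split; [exact Hc | split; [exact Hd | split; apply IH; assumption]].
Qed.

Lemma Ck_ext n : forall f g, (forall p t, f p t = g p t) -> Ck n f -> Ck n g.
Proof.
  induction n as [|n IH]; intros f g Efg Hf.
  - split; [|exact I]. intros p t.
    apply (continuous_ext (fun z : R * R => f (fst z) (snd z))); [intros; apply Efg|].
    apply (Ck_continuous 0), Hf.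
  - destruct Hf as [Hc [Hd [Hp Ht]]]. split; [|split; [|split]].
    + intros p t. apply (continuous_ext (fun z : R * R => f (fst z) (snd z)));
        [intros; apply Efg | apply Hc].
    + intros p t. destruct (Hd p t) as [Hdp Hdt].
      split; [apply (ex_derive_ext (fun q => f q t)) | apply (ex_derive_ext (fun s => f p s))];
        auto; intros; apply Efg.
    + apply (IH (dp f)); [|exact Hp]. intros p t. apply Derive_ext. intros; apply Efg.
    + apply (IH (dt f)); [|exact Ht]. intros p t. apply Derive_ext. intros; apply Efg.
Qed.

Lemma Ck_const n : forall c, Ck n (fun _ _ => c).
Proof.
  induction n as [|n IH]; intros c; (split; [intros p t; apply continuous_const|]); [exact I|].
  split; [intros p t; split; apply ex_derive_const|].
  split; apply (Ck_ext n (fun _ _ => 0)); try apply IH; intros p t; symmetry.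
  - exact (Derive_const c p).
  - exact (Derive_const c t).
Qed.

Lemma Ck_plus n : forall f g, Ck n f -> Ck n g -> Ck n (fun p t => f p t + g p t).
Proof.
  induction n as [|n IH]; intros f g Hf Hg; split; [| exact I | |].
  1,2: intros p t;
    apply (continuous_plus (fun z : R * R => f (fst z) (snd z)) (fun z : R * R => g (fst z) (snd z)));
    [exact (Ck_continuous _ f _ _ Hf) | exact (Ck_continuous _ g _ _ Hg)].
  destruct Hf as [_ [Df [Pf Tf]]], Hg as [_ [Dg [Pg Tg]]].
  split; [intros p t; destruct (Df p t), (Dg p t); split;
    [apply (ex_derive_plus (fun q => f q t) (fun q => g q t))
    |apply (ex_derive_plus (fun s => f p s) (fun s => g p s))]; assumption|].
  split.
  - apply (Ck_ext n (fun p t => dp f p t + dp g p t)); [|apply IH; assumption].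
    intros p t. symmetry. unfold dp.
    apply (Derive_plus (fun q => f q t)); [exact (proj1 (Df p t)) | exact (proj1 (Dg p t))].
  - apply (Ck_ext n (fun p t => dt f p t + dt g p t)); [|apply IH; assumption].
    intros p t. symmetry. unfold dt.
    apply (Derive_plus (fun s => f p s)); [exact (proj2 (Df p t)) | exact (proj2 (Dg p t))].
Qed.

Lemma Ck_opp n : forall f, Ck n f -> Ck n (fun p t => - f p t).
Proof.
  induction n as [|n IH]; intros f Hf; split; [| exact I | |].
  1,2: intros p t; apply (continuous_opp (fun z : R * R => f (fst z) (snd z)));
    exact (Ck_continuous _ f _ _ Hf).
  destruct Hf as [_ [Df [Pf Tf]]].
  split; [intros p t; destruct (Df p t); split;
    [apply (ex_derive_opp (fun q => f q t)) | apply (ex_derive_opp (fun s => f p s))]; assumption|].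
  split.
  - apply (Ck_ext n (fun p t => - dp f p t)); [|apply IH; assumption].
    intros p t. symmetry. exact (Derive_opp (fun q => f q t) p).
  - apply (Ck_ext n (fun p t => - dt f p t)); [|apply IH; assumption].
    intros p t. symmetry. exact (Derive_opp (fun s => f p s) t).
Qed.

Lemma Ck_mult n : forall f g, Ck n f -> Ck n g -> Ck n (fun p t => f p t * g p t).
Proof.
  induction n as [|n IH]; intros f g Hf Hg; split; [| exact I | |].
  1,2: intros p t;
    apply (continuous_mult (fun z : R * R => f (fst z) (snd z)) (fun z : R * R => g (fst z) (snd z)));
    [exact (Ck_continuous _ f _ _ Hf) | exact (Ck_continuous _ g _ _ Hg)].
  pose proof (Ck_weaken _ _ Hf) as Hf'; pose proof (Ck_weaken _ _ Hg) as Hg'.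
  destruct Hf as [_ [Df [Pf Tf]]], Hg as [_ [Dg [Pg Tg]]].
  split; [intros p t; destruct (Df p t), (Dg p t); split; apply ex_derive_mult; assumption|].
  split.
  - apply (Ck_ext n (fun p t => dp f p t * g p t + f p t * dp g p t));
      [|apply Ck_plus; apply IH; assumption].
    intros p t. symmetry. unfold dp.
    apply (Derive_mult (fun q => f q t) (fun q => g q t));
      [exact (proj1 (Df p t)) | exact (proj1 (Dg p t))].
  - apply (Ck_ext n (fun p t => dt f p t * g p t + f p t * dt g p t));
      [|apply Ck_plus; apply IH; assumption].
    intros p t. symmetry. unfold dt.
    apply (Derive_mult (fun s => f p s) (fun s => g p s));
      [exact (proj2 (Df p t)) | exact (proj2 (Dg p t))].
Qed.

Lemma Ck_inv n : forall f, Ck n f -> (forall p t, f p t <> 0) -> Ck n (fun p t => / f p t).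
Proof.
  induction n as [|n IH]; intros f Hf Hnz; split; [| exact I | |].
  1,2: intros p t; apply (continuous_comp (fun z : R * R => f (fst z) (snd z)) Rinv);
    [exact (Ck_continuous _ f _ _ Hf) | apply continuous_Rinv, Hnz].
  pose proof (IH f (Ck_weaken _ _ Hf) Hnz) as Hinv.
  destruct Hf as [_ [Df [Pf Tf]]].
  split; [intros p t; destruct (Df p t); split; apply ex_derive_inv; auto|].
  split.
  - apply (Ck_ext n (fun p t => - (dp f p t * (/ f p t * / f p t))));
      [|apply Ck_opp, Ck_mult, Ck_mult; assumption].
    intros p t. symmetry. unfold dp.
    rewrite (Derive_inv (fun q => f q t)); [field | exact (proj1 (Df p t)) |]; apply Hnz.
  - apply (Ck_ext n (fun p t => - (dt f p t * (/ f p t * / f p t))));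
      [|apply Ck_opp, Ck_mult, Ck_mult; assumption].
    intros p t. symmetry. unfold dt.
    rewrite (Derive_inv (fun s => f p s)); [field | exact (proj2 (Df p t)) |]; apply Hnz.
Qed.

Lemma Ck_sqrt n : forall f, Ck n f -> (forall p t, 0 < f p t) -> Ck n (fun p t => sqrt (f p t)).
Proof.
  induction n as [|n IH]; intros f Hf Hpos; split; [| exact I | |].
  1,2: intros p t; apply (continuous_comp (fun z : R * R => f (fst z) (snd z)) sqrt);
    [exact (Ck_continuous _ f _ _ Hf) | apply continuous_sqrt].
  assert (Hrec : Ck n (fun p t => / (2 * sqrt (f p t)))).
  { apply Ck_inv; [apply Ck_mult; [apply Ck_const | exact (IH f (Ck_weaken _ _ Hf) Hpos)]|].
    intros p t. specialize (sqrt_lt_R0 _ (Hpos p t)). lra. }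
  destruct Hf as [_ [Df [Pf Tf]]].
  split; [intros p t; destruct (Df p t) as [[d1 H1] [d2 H2]]; split; eexists;
    apply is_derive_sqrt; eauto|].
  split.
  - apply (Ck_ext n (fun p t => dp f p t * / (2 * sqrt (f p t)))); [|apply Ck_mult; assumption].
    intros p t. symmetry. destruct (Df p t) as [Hd _].
    apply is_derive_unique, (is_derive_sqrt (fun q => f q t));
      [apply Derive_correct, Hd | apply Hpos].
  - apply (Ck_ext n (fun p t => dt f p t * / (2 * sqrt (f p t)))); [|apply Ck_mult; assumption].
    intros p t. symmetry. destruct (Df p t) as [_ Hd].
    apply is_derive_unique, (is_derive_sqrt (fun s => f p s));
      [apply Derive_correct, Hd | apply Hpos].
Qed.

Lemma smooth2_dp f : smooth2 f -> smooth2 (dp f).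
Proof. intros Hf n. apply (Hf (S n)). Qed.

Lemma smooth2_dt f : smooth2 f -> smooth2 (dt f).
Proof. intros Hf n. apply (Hf (S n)). Qed.

Lemma smooth2_ex_derive_p f p t : smooth2 f -> ex_derive (fun q => f q t) p.
Proof. intros Hf. destruct (Hf 1%nat) as [_ [Hd _]]. exact (proj1 (Hd p t)). Qed.

Lemma smooth2_ex_derive_t f p t : smooth2 f -> ex_derive (fun s => f p s) t.
Proof. intros Hf. destruct (Hf 1%nat) as [_ [Hd _]]. exact (proj2 (Hd p t)). Qed.

Lemma smooth2_continuity_2d f p t : smooth2 f -> continuity_2d_pt f p t.
Proof. intros Hf. apply continuity_2d_pt_filterlim, (Ck_continuous 0), Hf. Qed.

Lemma smooth2_continuous_p f p t : smooth2 f -> continuous (fun q => f q t) p.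
Proof. intros Hf. apply (ex_derive_continuous (fun q => f q t)), smooth2_ex_derive_p, Hf. Qed.

Lemma smooth2_const c : smooth2 (fun _ _ => c).
Proof. intros n. apply Ck_const. Qed.

Lemma smooth2_plus f g : smooth2 f -> smooth2 g -> smooth2 (fun p t => f p t + g p t).
Proof. intros Hf Hg n. apply Ck_plus; auto. Qed.

Lemma smooth2_opp f : smooth2 f -> smooth2 (fun p t => - f p t).
Proof. intros Hf n. apply Ck_opp; auto. Qed.

Lemma smooth2_minus f g : smooth2 f -> smooth2 g -> smooth2 (fun p t => f p t - g p t).
Proof. intros Hf Hg. apply smooth2_plus; [|apply smooth2_opp]; assumption. Qed.

Lemma smooth2_mult f g : smooth2 f -> smooth2 g -> smooth2 (fun p t => f p t * g p t).
Proof. intros Hf Hg n. apply Ck_mult; auto. Qed.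

Lemma smooth2_pow f k : smooth2 f -> smooth2 (fun p t => f p t ^ k).
Proof.
  intros Hf. induction k as [|k IH]; simpl; [apply smooth2_const | apply smooth2_mult; assumption].
Qed.

Lemma smooth2_inv f : smooth2 f -> (forall p t, f p t <> 0) -> smooth2 (fun p t => / f p t).
Proof. intros Hf Hnz n. apply Ck_inv; auto. Qed.

Lemma smooth2_div f g :
  smooth2 f -> smooth2 g -> (forall p t, g p t <> 0) -> smooth2 (fun p t => f p t / g p t).
Proof. intros Hf Hg Hnz. apply smooth2_mult; [|apply smooth2_inv]; assumption. Qed.

Lemma smooth2_sqrt f : smooth2 f -> (forall p t, 0 < f p t) -> smooth2 (fun p t => sqrt (f p t)).
Proof. intros Hf Hpos n. apply Ck_sqrt; auto. Qed.

Lemma smooth2_dp_dt f p t : smooth2 f -> dp (dt f) p t = dt (dp f) p t.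
Proof.
  intros Hf. apply Schwarz.
  - exists (mkposreal 1 Rlt_0_1). intros u v _ _. repeat split.
    + apply smooth2_ex_derive_p, Hf.
    + apply smooth2_ex_derive_t, Hf.
    + apply (smooth2_ex_derive_p (dt f)), smooth2_dt, Hf.
    + apply (smooth2_ex_derive_t (dp f)), smooth2_dp, Hf.
  - apply smooth2_continuity_2d, smooth2_dp, smooth2_dt, Hf.
  - apply smooth2_continuity_2d, smooth2_dt, smooth2_dp, Hf.
Qed.

(** * Calculus in one and two variables *)

Lemma dp_ext_open f g a b p t :
  (forall q, a < q < b -> f q t = g q t) -> a < p < b -> dp f p t = dp g p t.
Proof.
  intros Efg Hp. apply Derive_ext_loc.
  assert (Hd : 0 < Rmin (p - a) (b - p)) by (apply Rmin_glb_lt; lra).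
  exists (mkposreal _ Hd). intros q Hq. apply Efg.
  change (Rabs (q - p) < Rmin (p - a) (b - p)) in Hq.
  apply Rabs_def2 in Hq.
  pose proof (Rmin_l (p - a) (b - p)). pose proof (Rmin_r (p - a) (b - p)). lra.
Qed.

Definition periodic_p (f : R -> R -> R) : Prop := forall p t, f (p + 1) t = f p t.

Lemma periodic_p_dp f : periodic_p f -> periodic_p (dp f).
Proof.
  intros Hf p t. unfold dp, Derive. f_equal. apply Lim_ext. intros h.
  replace (p + 1 + h) with (p + h + 1) by ring. rewrite !Hf. reflexivity.
Qed.

Lemma RInt_periodic_shift (f : R -> R) T a :
  (forall x, continuous f x) -> (forall x, f (x + T) = f x) -> RInt f a (a + T) = RInt f 0 T.
Proof.
  intros Hc Hf.
  assert (Hex : forall u v, ex_RInt f u v)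
    by (intros; apply (ex_RInt_continuous (V:=R_CompleteNormedModule)); intros; apply Hc).
  assert (Hshift : RInt f T (a + T) = RInt f 0 a).
  { pose proof (RInt_comp_lin f 1 T 0 a (Hex _ _)) as Hlin.
    replace (1 * 0 + T) with T in Hlin by ring. replace (1 * a + T) with (a + T) in Hlin by ring.
    rewrite <- Hlin. apply RInt_ext. intros x _. change (1 * f (1 * x + T) = f x).
    rewrite !Rmult_1_l. apply Hf. }
  rewrite <- (RInt_Chasles f a T (a + T)), Hshift by apply Hex.
  rewrite <- (RInt_Chasles f 0 a T) by apply Hex.
  change (RInt f a T + RInt f 0 a = RInt f 0 a + RInt f a T). apply Rplus_comm.
Qed.

Lemma ex_RInt_smooth2 F a b t : smooth2 F -> ex_RInt (fun p => F p t) a b.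
Proof.
  intros HF. apply (ex_RInt_continuous (V:=R_CompleteNormedModule)).
  intros z _. apply smooth2_continuous_p, HF.
Qed.

Lemma is_derive_RInt_smooth2 F a b t : smooth2 F ->
  is_derive (fun s => RInt (fun p => F p s) a b) t (RInt (fun p => dt F p t) a b).
Proof.
  intros HF. apply (is_derive_RInt_param (fun s p => F p s)).
  - apply filter_forall. intros s p _. apply smooth2_ex_derive_t, HF.
  - intros p _ eps. destruct (smooth2_continuity_2d (dt F) p t (smooth2_dt F HF) eps) as [d Hd].
    exists d. intros u v Hu Hv. apply Hd; assumption.
  - apply filter_forall. intros s. apply ex_RInt_smooth2, HF.
Qed.

Lemma is_derive_nonneg_le f df a b : a <= b ->
  (forall x, a <= x <= b -> is_derive f x (df x)) -> (forall x, a <= x <= b -> 0 <= df x) ->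
  f a <= f b.
Proof.
  intros Hab Hd Hpos.
  destruct (MVT_gen f a b df) as [c [Hc Heq]].
  - intros x Hx. apply Hd. rewrite Rmin_left, Rmax_right in Hx by lra. lra.
  - intros x Hx. apply continuity_pt_filterlim, (ex_derive_continuous f).
    exists (df x). apply Hd. rewrite Rmin_left, Rmax_right in Hx by lra. exact Hx.
  - rewrite Rmin_left, Rmax_right in Hc by lra.
    assert (0 <= df c * (b - a)) by (apply Rmult_le_pos; [apply Hpos | ]; lra). lra.
Qed.

Lemma continuity_2d_nonzero_neg f p1 t1 p t :
  (forall p t, continuity_2d_pt f p t) -> (forall p t, f p t <> 0) -> f p1 t1 < 0 -> f p t < 0.
Proof.
  intros Hc Hnz H1. apply Rnot_le_lt. intros H2.
  destruct (Rle_lt_or_eq_dec _ _ H2) as [Hlt | Heq]; [|exact (Hnz p t (eq_sym Heq))].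
  set (seg := fun s => f (p1 + s * (p - p1)) (t1 + s * (t - t1))).
  assert (Hseg : continuity seg).
  { intros s. apply continuity_pt_filterlim.
    apply (continuous_comp_2 (fun s => p1 + s * (p - p1)) (fun s => t1 + s * (t - t1)) f).
    - apply (ex_derive_continuous (fun s => p1 + s * (p - p1))). auto_derive. exact I.
    - apply (ex_derive_continuous (fun s => t1 + s * (t - t1))). auto_derive. exact I.
    - apply continuity_2d_pt_filterlim, Hc. }
  assert (S0 : seg 0 = f p1 t1) by (unfold seg; f_equal; ring).
  assert (S1 : seg 1 = f p t) by (unfold seg; f_equal; ring).
  destruct (IVT seg 0 1 Hseg Rlt_0_1) as [z [_ Hz]]; [lra | lra |].
  exact (Hnz _ _ Hz).
Qed.

(** * A differential inequality at -oo *)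

Lemma is_lim_m_infty_increment (L : R -> R) m :
  (forall x y, x <= y -> L x <= L y) -> (forall t, m <= L t) ->
  is_lim (fun s => L s - L (s - 1)) m_infty 0.
Proof.
  intros Hmono Hbd.
  destruct (completeness (fun x => exists t, x = - L t)) as [M [Hub Hleast]].
  { exists (- m). intros x [t ->]. specialize (Hbd t). lra. }
  { exists (- L 0), 0. reflexivity. }
  apply is_lim_spec. intros eps.
  assert (HT : exists T, L T < - M + eps).
  { apply NNPP. intros Hno.
    assert (M <= M - eps); [|destruct eps; simpl in *; lra].
    apply Hleast. intros x [t ->]. apply Rnot_lt_le. intros Ht. apply Hno. exists t. lra. }
  destruct HT as [T HT]. exists T. intros s Hs.
  assert (- L (s - 1) <= M) by (apply Hub; exists (s - 1); reflexivity).
  pose proof (Hmono (s - 1) s ltac:(lra)). pose proof (Hmono s T ltac:(lra)).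
  rewrite Rminus_0_r, Rabs_pos_eq; lra.
Qed.

Section BackwardGrowth.
Variables (E L : R -> R) (K : R).
Hypothesis K_pos : 0 < K.
Hypothesis L_derive : forall t, is_derive L t (E t).
Hypothesis E_growth : forall t, exists d, is_derive E t d /\ d <= K * E t.

Lemma backward_gronwall u s : u <= s -> E s * exp (K * (u - s)) <= E u.
Proof.
  intros Hus.
  assert (Hdec : - (E u * exp (- K * u)) <= - (E s * exp (- K * s))).
  { apply (is_derive_nonneg_le (fun v => - (E v * exp (- K * v)))
      (fun v => - ((Derive E v - K * E v) * exp (- K * v)))); [exact Hus | |].
    - intros v _. destruct (E_growth v) as [d [Hd _]].
      auto_derive; [exists d; exact Hd|].
      change (Derive (fun x => E x) v) with (Derive E v). ring.
    - intros v _. destruct (E_growth v) as [d [Hd Hle]].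
      rewrite (is_derive_unique E v d Hd).
      pose proof (exp_pos (- K * v)).
      assert (0 <= (K * E v - d) * exp (- K * v)) by (apply Rmult_le_pos; lra). lra. }
  replace (K * (u - s)) with (- K * s + - (- K * u)) by ring.
  rewrite exp_plus, exp_Ropp. pose proof (exp_pos (- K * u)).
  apply (Rmult_le_reg_r (exp (- K * u))); [assumption|].
  replace (E s * (exp (- K * s) * / exp (- K * u)) * exp (- K * u)) with (E s * exp (- K * s))
    by (field; lra).
  lra.
Qed.

Lemma increment_lower_bound s : (1 - exp (- K)) / K * E s <= L s - L (s - 1).
Proof.
  assert (H : L (s - 1) - E s * exp (K * (s - 1 - s)) / K <= L s - E s * exp (K * (s - s)) / K).
  { apply (is_derive_nonneg_le (fun u => L u - E s * exp (K * (u - s)) / K)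
      (fun u => E u - E s * exp (K * (u - s)))); [lra | |].
    - intros u _. auto_derive; [exists (E u); apply L_derive|].
      change (Derive (fun x => L x) u) with (Derive L u).
      rewrite (is_derive_unique L u (E u) (L_derive u)).
      replace (u + - s) with (u - s) by ring. field. lra.
    - intros u Hu. pose proof (backward_gronwall u s ltac:(lra)). lra. }
  replace (K * (s - 1 - s)) with (- K) in H by ring.
  replace (K * (s - s)) with 0 in H by ring. rewrite exp_0 in H.
  replace ((1 - exp (- K)) / K * E s) with (E s / K - E s * exp (- K) / K) by (field; lra).
  lra.
Qed.

End BackwardGrowth.

Lemma is_lim_m_infty_of_growth (E L : R -> R) K m : 0 < K ->
  (forall t, is_derive L t (E t)) -> (forall t, m <= L t) ->
  (forall t, 0 <= E t) -> (forall t, exists d, is_derive E t d /\ d <= K * E t) ->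
  is_lim E m_infty 0.
Proof.
  intros HK HL Hm HE HEd.
  set (c := (1 - exp (- K)) / K).
  assert (Hc : 0 < c).
  { unfold c. apply Rdiv_lt_0_compat; [|assumption].
    rewrite <- exp_0 at 1. pose proof (exp_increasing (- K) 0 ltac:(lra)). lra. }
  apply (is_lim_le_le_loc (fun _ => 0) (fun s => / c * (L s - L (s - 1)))).
  - exists 0. intros s _. split; [apply HE|].
    pose proof (increment_lower_bound E L K HK HL HEd s) as Hinc. fold c in Hinc.
    apply (Rmult_le_reg_l c); [assumption|]. field_simplify; lra.
  - apply is_lim_const.
  - replace (Finite 0) with (Rbar_mult (/ c) 0) by (simpl; f_equal; ring).
    apply is_lim_scal_l, (is_lim_m_infty_increment L m); [|assumption].
    intros x y Hxy.
    apply (is_derive_nonneg_le L E); [assumption | intros; apply HL | intros; apply HE].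
Qed.

(** * The centro-affine flow *)

Create HintDb smooth2.
#[export] Hint Resolve smooth2_dp smooth2_dt : smooth2.

Ltac ex_derive_smooth2 :=
  match goal with
  | |- ex_derive (fun x => ?f x ?t) ?p =>
      apply (smooth2_ex_derive_p f p t); solve [auto with smooth2]
  | |- ex_derive (fun x => ?f ?p x) ?t =>
      apply (smooth2_ex_derive_t f p t); solve [auto with smooth2]
  end.

Section CentroAffineCurve.
Variables X Y : R -> R -> R.
Hypothesis X_smooth : smooth2 X.
Hypothesis Y_smooth : smooth2 Y.
Hypothesis nondeg : nondegenerate X Y.
#[local] Hint Resolve X_smooth Y_smooth : smooth2.

Local Notation g := (cag X Y).
Local Notation phi := (caphi X Y).

Definition det_C_Cp p t := det2 (X p t) (Y p t) (Xp X p t) (Yp Y p t).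
Definition det_Cp_Cpp p t := det2 (Xp X p t) (Yp Y p t) (Xpp X p t) (Ypp Y p t).
Local Notation h := det_C_Cp.
Local Notation k := det_Cp_Cpp.

Definition metric_sq p t := k p t / h p t.

Lemma det_C_Cp_neq0 p t : h p t <> 0.
Proof. exact (proj1 (nondeg p t)). Qed.

Lemma det_Cp_Cpp_neq0 p t : k p t <> 0.
Proof. exact (proj2 (nondeg p t)). Qed.

Lemma smooth2_det_C_Cp : smooth2 h.
Proof.
  unfold det_C_Cp, det2, Xp, Yp. apply smooth2_minus; apply smooth2_mult; auto with smooth2.
Qed.

Lemma smooth2_det_Cp_Cpp : smooth2 k.
Proof.
  unfold det_Cp_Cpp, det2, Xpp, Ypp, Xp, Yp.
  apply smooth2_minus; apply smooth2_mult; auto with smooth2.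
Qed.

Lemma smooth2_metric_sq : smooth2 metric_sq.
Proof. exact (smooth2_div _ _ smooth2_det_Cp_Cpp smooth2_det_C_Cp det_C_Cp_neq0). Qed.

Lemma metric_sq_neq0 p t : metric_sq p t <> 0.
Proof.
  apply Rmult_integral_contrapositive_currified;
    [apply det_Cp_Cpp_neq0 | apply Rinv_neq_0_compat, det_C_Cp_neq0].
Qed.

Hypothesis metric_sq_pos : forall p t, 0 < metric_sq p t.

Lemma cag_pos p t : 0 < g p t.
Proof. apply sqrt_lt_R0, metric_sq_pos. Qed.

Lemma cag_neq0 p t : g p t <> 0.
Proof. apply Rgt_not_eq, cag_pos. Qed.

Local Ltac nonzero := repeat apply Rmult_integral_contrapositive_currified;
  first [apply cag_neq0 | apply det_C_Cp_neq0 | lra].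

Lemma smooth2_cag : smooth2 g.
Proof. exact (smooth2_sqrt _ smooth2_metric_sq metric_sq_pos). Qed.
#[local] Hint Resolve smooth2_det_C_Cp smooth2_det_Cp_Cpp smooth2_cag : smooth2.

Lemma det_Cp_Cpp_cag p t : k p t = g p t ^ 2 * h p t.
Proof.
  change (g p t) with (sqrt (metric_sq p t)). rewrite pow2_sqrt by (left; apply metric_sq_pos).
  unfold metric_sq. field. apply det_C_Cp_neq0.
Qed.

Lemma dp_Xxi p t :
  dp (Xxi X Y) p t = dp (dp X) p t / g p t - dp X p t * dp g p t / g p t ^ 2.
Proof.
  unfold dp at 1. unfold Xxi, Xp. apply is_derive_unique. auto_derive.
  - repeat split; try ex_derive_smooth2. apply cag_neq0.
  - unfold dp. field. apply cag_neq0.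
Qed.

Lemma dp_Yxi p t :
  dp (Yxi X Y) p t = dp (dp Y) p t / g p t - dp Y p t * dp g p t / g p t ^ 2.
Proof.
  unfold dp at 1. unfold Yxi, Yp. apply is_derive_unique. auto_derive.
  - repeat split; try ex_derive_smooth2. apply cag_neq0.
  - unfold dp. field. apply cag_neq0.
Qed.

Lemma dp_det_C_Cp p t : dp h p t = det2 (X p t) (Y p t) (dp (dp X) p t) (dp (dp Y) p t).
Proof.
  unfold dp at 1. unfold det_C_Cp, det2, Xp, Yp. apply is_derive_unique. auto_derive.
  - repeat split; ex_derive_smooth2.
  - unfold dp. ring.
Qed.

Lemma dp_det_C_Cp_caphi p t :
  dp h p t = h p t * (phi p t * g p t + dp g p t / g p t).
Proof.
  rewrite dp_det_C_Cp. unfold caphi, Xxixi, Yxixi. rewrite dp_Xxi, dp_Yxi.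
  pose proof (det_C_Cp_neq0 p t) as Hh.
  unfold det_C_Cp, det2, Xp, Yp in Hh |- *. unfold Xxi, Yxi, Xp, Yp.
  field. split; [apply cag_neq0 | contradict Hh; lra].
Qed.

Lemma smooth2_Xxi : smooth2 (Xxi X Y).
Proof. apply smooth2_div; auto with smooth2. apply cag_neq0. Qed.

Lemma smooth2_Yxi : smooth2 (Yxi X Y).
Proof. apply smooth2_div; auto with smooth2. apply cag_neq0. Qed.
#[local] Hint Resolve smooth2_Xxi smooth2_Yxi : smooth2.

Lemma det2_Cxi_C p t : det2 (Xxi X Y p t) (Yxi X Y p t) (X p t) (Y p t) = - h p t / g p t.
Proof. unfold det_C_Cp, det2, Xxi, Yxi. field. apply cag_neq0. Qed.

Lemma smooth2_caphi : smooth2 phi.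
Proof.
  unfold caphi, det2, Xxixi, Yxixi. apply smooth2_div.
  - apply smooth2_minus; apply smooth2_mult; auto with smooth2;
      apply smooth2_div; auto with smooth2; apply cag_neq0.
  - apply smooth2_minus; apply smooth2_mult; auto with smooth2.
  - intros p t. fold (det2 (Xxi X Y p t) (Yxi X Y p t) (X p t) (Y p t)). rewrite det2_Cxi_C.
    unfold Rdiv. apply Rmult_integral_contrapositive_currified;
      [apply Ropp_neq_0_compat, det_C_Cp_neq0 | apply Rinv_neq_0_compat, cag_neq0].
Qed.
#[local] Hint Resolve smooth2_caphi : smooth2.

Lemma dp_dp_det_C_Cp p t : dp (dp h) p t =
  dp h p t * (phi p t * g p t + dp g p t / g p t)
  + h p t * (dp phi p t * g p t + phi p t * dp g p t
                + dp (dp g) p t / g p t - dp g p t ^ 2 / g p t ^ 2).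
Proof.
  unfold dp at 1. rewrite (Derive_ext _ (fun q => h q t * (phi q t * g q t
      + dp g q t / g q t))) by (intros; apply dp_det_C_Cp_caphi).
  apply is_derive_unique. auto_derive.
  - repeat split; try ex_derive_smooth2; nonzero.
  - unfold dp. field. apply cag_neq0.
Qed.

Lemma dp_det_Cp_Cpp p t :
  dp k p t = det2 (dp X p t) (dp Y p t) (dp (dp (dp X)) p t) (dp (dp (dp Y)) p t).
Proof.
  unfold dp at 1. unfold det_Cp_Cpp, det2, Xpp, Ypp, Xp, Yp. apply is_derive_unique. auto_derive.
  - repeat split; ex_derive_smooth2.
  - unfold dp. ring.
Qed.

Lemma dp_det_Cp_Cpp_cag p t :
  dp k p t = 2 * g p t * dp g p t * h p t + g p t ^ 2 * dp h p t.
Proof.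
  unfold dp at 1.
  rewrite (Derive_ext _ (fun q => g q t ^ 2 * h q t)) by (intros; apply det_Cp_Cpp_cag).
  apply is_derive_unique. auto_derive.
  - repeat split; ex_derive_smooth2.
  - unfold dp. ring.
Qed.

Lemma dt_det_Cp_Cpp_cag p t :
  dt k p t = 2 * g p t * dt g p t * h p t + g p t ^ 2 * dt h p t.
Proof.
  unfold dt at 1.
  rewrite (Derive_ext _ (fun s => g p s ^ 2 * h p s)) by (intros; apply det_Cp_Cpp_cag).
  apply is_derive_unique. auto_derive.
  - repeat split; ex_derive_smooth2.
  - unfold dt. ring.
Qed.

(* [ca_flow] prescribes C_t only for p in [p0, p0 + 1), where its nonlocal coefficient
   [coefC] is a primitive based at p0; p-derivatives of the flow live on the open strip. *)
Variables lam p0 : R.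
Hypothesis flow : ca_flow lam p0 X Y.

Definition coefC p t := lam + cumphi X Y p0 p t.
Definition coefCp p t := phi p t / 2 / g p t.

Lemma is_derive_coefC p t : is_derive (fun q => coefC q t) p (phi p t * g p t).
Proof.
  unfold coefC, cumphi.
  assert (Hc : forall q, continuous (fun r => phi r t * g r t) q).
  { intros q. apply (smooth2_continuous_p (fun r s => phi r s * g r s)).
    apply smooth2_mult; auto with smooth2. }
  assert (Hlam : is_derive (fun _ : R => lam) p 0) by (auto_derive; auto).
  assert (Hint : is_derive (fun q => RInt (fun r => phi r t * g r t) p0 q) p
                   (phi p t * g p t)).
  { apply (is_derive_RInt (fun r => phi r t * g r t) _ p0 p); [|apply Hc].
    apply filter_forall. intros b.
    apply (RInt_correct (V:=R_CompleteNormedModule)), (ex_RInt_continuous (V:=R_CompleteNormedModule)).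
    intros; apply Hc. }
  rewrite <- (Rplus_0_l (phi p t * g p t)).
  exact (is_derive_plus _ _ p _ _ Hlam Hint).
Qed.

Lemma ex_derive_coefC p t : ex_derive (fun q => coefC q t) p.
Proof. eexists. apply is_derive_coefC. Qed.

Lemma Derive_coefC p t : Derive (fun q => coefC q t) p = phi p t * g p t.
Proof. apply is_derive_unique, is_derive_coefC. Qed.

Lemma smooth2_coefCp : smooth2 coefCp.
Proof.
  apply smooth2_div; [apply smooth2_div; [auto with smooth2 | apply smooth2_const | intros; lra]
                    | auto with smooth2 | apply cag_neq0].
Qed.
#[local] Hint Resolve smooth2_coefCp : smooth2.

Lemma dp_coefCp p t : dp coefCp p t =
  dp phi p t / 2 / g p t - phi p t / 2 * dp g p t / g p t ^ 2.
Proof.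
  unfold dp at 1. unfold coefCp. apply is_derive_unique. auto_derive.
  - repeat split; try ex_derive_smooth2. apply cag_neq0.
  - unfold dp. field. apply cag_neq0.
Qed.

Lemma dp_dp_coefCp p t : dp (dp coefCp) p t =
  dp (dp phi) p t / 2 / g p t - dp phi p t * dp g p t / g p t ^ 2
  - phi p t / 2 * dp (dp g) p t / g p t ^ 2
  + phi p t * dp g p t ^ 2 / g p t ^ 3.
Proof.
  unfold dp at 1. rewrite (Derive_ext _ (fun q => dp phi q t / 2 / g q t
      - phi q t / 2 * dp g q t / g q t ^ 2)) by (intros; apply dp_coefCp).
  apply is_derive_unique. auto_derive.
  - repeat split; try ex_derive_smooth2; nonzero.
  - unfold dp. field. apply cag_neq0.
Qed.

Lemma dt_X_flow p t : p0 <= p < p0 + 1 -> dt X p t = coefC p t * X p t + coefCp p t * dp X p t.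
Proof.
  intros Hp. rewrite (proj1 (flow p t Hp)). unfold coefC, coefCp, Xxi, Xp. field. apply cag_neq0.
Qed.

Lemma dt_Y_flow p t : p0 <= p < p0 + 1 -> dt Y p t = coefC p t * Y p t + coefCp p t * dp Y p t.
Proof.
  intros Hp. rewrite (proj2 (flow p t Hp)). unfold coefC, coefCp, Yxi, Yp. field. apply cag_neq0.
Qed.

Section FlowComponent.
Variable Z : R -> R -> R.
Hypothesis Z_smooth : smooth2 Z.
Hypothesis Z_flow : forall p t, p0 <= p < p0 + 1 ->
  dt Z p t = coefC p t * Z p t + coefCp p t * dp Z p t.
#[local] Hint Resolve Z_smooth : smooth2.

Lemma dt_dp_flow p t : p0 < p < p0 + 1 ->
  dt (dp Z) p t = phi p t * g p t * Z p t + coefC p t * dp Z p t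
    + dp coefCp p t * dp Z p t + coefCp p t * dp (dp Z) p t.
Proof.
  intros Hp. rewrite <- smooth2_dp_dt by exact Z_smooth.
  rewrite (dp_ext_open _ (fun q t => coefC q t * Z q t + coefCp q t * dp Z q t) p0 (p0 + 1))
    by (try intros; try apply Z_flow; lra).
  unfold dp at 1. apply is_derive_unique. auto_derive.
  - repeat split; try ex_derive_smooth2. apply ex_derive_coefC.
  - rewrite Derive_coefC. unfold dp. ring.
Qed.

Lemma dt_dp_dp_flow p t : p0 < p < p0 + 1 ->
  dt (dp (dp Z)) p t = (dp phi p t * g p t + phi p t * dp g p t) * Z p t
    + 2 * phi p t * g p t * dp Z p t + coefC p t * dp (dp Z) p t
    + dp (dp coefCp) p t * dp Z p t + 2 * dp coefCp p t * dp (dp Z) p t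
    + coefCp p t * dp (dp (dp Z)) p t.
Proof.
  intros Hp. rewrite <- smooth2_dp_dt by auto with smooth2.
  rewrite (dp_ext_open _ (fun q t => phi q t * g q t * Z q t + coefC q t * dp Z q t
      + dp coefCp q t * dp Z q t + coefCp q t * dp (dp Z) q t) p0 (p0 + 1))
    by (try intros; try apply dt_dp_flow; lra).
  unfold dp at 1. apply is_derive_unique. auto_derive.
  - repeat split; try ex_derive_smooth2. apply ex_derive_coefC.
  - rewrite Derive_coefC. unfold dp. ring.
Qed.

End FlowComponent.

Lemma dt_det_C_Cp p t : p0 < p < p0 + 1 ->
  dt h p t = 2 * coefC p t * h p t + dp coefCp p t * h p t + coefCp p t * dp h p t.
Proof.
  intros Hp.
  assert (Hprod : dt h p t = dt X p t * dp Y p t + X p t * dt (dp Y) p t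
                                - dt Y p t * dp X p t - Y p t * dt (dp X) p t).
  { unfold dt at 1. unfold det_C_Cp, det2, Xp, Yp. apply is_derive_unique. auto_derive.
    - repeat split; ex_derive_smooth2.
    - unfold dt. ring. }
  rewrite Hprod, (dt_dp_flow X X_smooth dt_X_flow p t Hp), (dt_dp_flow Y Y_smooth dt_Y_flow p t Hp),
    (dt_X_flow p t ltac:(lra)), (dt_Y_flow p t ltac:(lra)), dp_det_C_Cp.
  unfold det_C_Cp, det2, Xp, Yp. ring.
Qed.

Lemma dt_det_Cp_Cpp p t : p0 < p < p0 + 1 ->
  dt k p t = phi p t * g p t * dp h p t
    - (dp phi p t * g p t + phi p t * dp g p t) * h p t
    + 2 * coefC p t * k p t + 3 * dp coefCp p t * k p t + coefCp p t * dp k p t.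
Proof.
  intros Hp.
  assert (Hprod : dt k p t = dt (dp X) p t * dp (dp Y) p t + dp X p t * dt (dp (dp Y)) p t
                                - dt (dp Y) p t * dp (dp X) p t - dp Y p t * dt (dp (dp X)) p t).
  { unfold dt at 1. unfold det_Cp_Cpp, det2, Xpp, Ypp, Xp, Yp. apply is_derive_unique. auto_derive.
    - repeat split; ex_derive_smooth2.
    - unfold dt. ring. }
  rewrite Hprod, (dt_dp_flow X X_smooth dt_X_flow p t Hp), (dt_dp_flow Y Y_smooth dt_Y_flow p t Hp),
    (dt_dp_dp_flow X X_smooth dt_X_flow p t Hp), (dt_dp_dp_flow Y Y_smooth dt_Y_flow p t Hp),
    dp_det_C_Cp, dp_det_Cp_Cpp.
  unfold det_C_Cp, det_Cp_Cpp, det2, Xpp, Ypp, Xp, Yp. ring.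
Qed.

Lemma dt_cag p t : p0 < p < p0 + 1 -> dt g p t = g p t * phi p t ^ 2 / 2.
Proof.
  intros Hp.
  (* Differentiate k = g^2 h in t and compare with the flow equation for k. *)
  assert (Hsolve : dt g p t
                   = (dt k p t - g p t ^ 2 * dt h p t) / (2 * g p t * h p t)).
  { rewrite dt_det_Cp_Cpp_cag. field. repeat split; nonzero. }
  rewrite Hsolve, dt_det_Cp_Cpp, dt_det_C_Cp, dp_det_Cp_Cpp_cag, det_Cp_Cpp_cag, dp_det_C_Cp_caphi,
    dp_coefCp by assumption.
  unfold coefCp. field. repeat split; nonzero.
Qed.

Lemma dp_dt_det_C_Cp p t : p0 < p < p0 + 1 ->
  dp (dt h) p t = 2 * phi p t * g p t * h p t + 2 * coefC p t * dp h p t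
    + dp (dp coefCp) p t * h p t + 2 * dp coefCp p t * dp h p t + coefCp p t * dp (dp h) p t.
Proof.
  intros Hp.
  rewrite (dp_ext_open _ (fun q t => 2 * coefC q t * h q t + dp coefCp q t * h q t
      + coefCp q t * dp h q t) p0 (p0 + 1)) by (try intros; try apply dt_det_C_Cp; lra).
  unfold dp at 1. apply is_derive_unique. auto_derive.
  - repeat split; try ex_derive_smooth2. apply ex_derive_coefC.
  - rewrite Derive_coefC. unfold dp. ring.
Qed.

Lemma dp_dt_cag p t : p0 < p < p0 + 1 ->
  dp (dt g) p t = dp g p t * phi p t ^ 2 / 2
    + g p t * phi p t * dp phi p t.
Proof.
  intros Hp.
  rewrite (dp_ext_open _ (fun q t => g q t * phi q t ^ 2 / 2) p0 (p0 + 1))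
    by (try intros; try apply dt_cag; lra).
  unfold dp at 1. apply is_derive_unique. auto_derive.
  - repeat split; ex_derive_smooth2.
  - unfold dp. field.
Qed.

Lemma dt_caphi p t : p0 < p < p0 + 1 ->
  dt phi p t = 2 * phi p t + dp (dp phi) p t / (2 * g p t ^ 2)
    - dp phi p t * dp g p t / (2 * g p t ^ 3) - phi p t ^ 3 / 2.
Proof.
  intros Hp.
  (* Write phi = (h_p/h - g_p/g)/g and commute d/dt with d/dp. *)
  assert (Hquot : dt phi p t =
    ((dt (dp h) p t * h p t - dp h p t * dt h p t) / h p t ^ 2
     - (dt (dp g) p t * g p t - dp g p t * dt g p t) / g p t ^ 2)
      / g p t
    - (dp h p t / h p t - dp g p t / g p t) * dt g p t / g p t ^ 2).
  { unfold dt at 1. rewrite (Derive_ext _ (fun s => (dp h p s / h p s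
        - dp g p s / g p s) / g p s))
      by (intros; rewrite dp_det_C_Cp_caphi; field; split; nonzero).
    apply is_derive_unique. auto_derive.
    - repeat split; try ex_derive_smooth2; nonzero.
    - unfold dt. field. split; nonzero. }
  rewrite Hquot, <- !smooth2_dp_dt by auto with smooth2.
  rewrite dp_dt_det_C_Cp, dp_dt_cag, dt_det_C_Cp, dt_cag, dp_dp_det_C_Cp, dp_det_C_Cp_caphi,
    dp_dp_coefCp, dp_coefCp
    by assumption.
  unfold coefCp. field. split; nonzero.
Qed.

Definition energy_density p t := phi p t ^ 2 * g p t.
Definition energy_flux p t := phi p t * dp phi p t / g p t.

Lemma dt_energy_density p t : p0 < p < p0 + 1 ->
  dt energy_density p t = 4 * energy_density p t - phi p t ^ 4 * g p t / 2
    - dp phi p t ^ 2 / g p t + dp energy_flux p t.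
Proof.
  intros Hp.
  assert (Hdens : dt energy_density p t
      = 2 * phi p t * dt phi p t * g p t + phi p t ^ 2 * dt g p t).
  { unfold dt at 1. unfold energy_density. apply is_derive_unique. auto_derive.
    - repeat split; ex_derive_smooth2.
    - unfold dt. ring. }
  assert (Hflux : dp energy_flux p t = (dp phi p t ^ 2 + phi p t * dp (dp phi) p t)
      / g p t - phi p t * dp phi p t * dp g p t / g p t ^ 2).
  { unfold dp at 1. unfold energy_flux. apply is_derive_unique. auto_derive.
    - repeat split; try ex_derive_smooth2. apply cag_neq0.
    - unfold dp. field. apply cag_neq0. }
  rewrite Hdens, Hflux, dt_caphi, dt_cag by assumption.
  unfold energy_density. field. apply cag_neq0.
Qed.

Lemma dt_energy_density_le p t : p0 < p < p0 + 1 ->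
  dt energy_density p t <= 4 * energy_density p t + dp energy_flux p t.
Proof.
  intros Hp. rewrite dt_energy_density by assumption.
  pose proof (cag_pos p t) as Hg.
  assert (0 <= phi p t ^ 4 * g p t / 2).
  { replace (phi p t ^ 4) with ((phi p t ^ 2) ^ 2) by ring.
    apply Rmult_le_pos; [apply Rmult_le_pos; [apply pow2_ge_0 | lra] | lra]. }
  assert (0 <= dp phi p t ^ 2 / g p t).
  { apply Rmult_le_pos; [apply pow2_ge_0 | left; apply Rinv_0_lt_compat, Hg]. }
  lra.
Qed.

Hypothesis X_periodic : periodic_p X.
Hypothesis Y_periodic : periodic_p Y.

Lemma periodic_p_det_C_Cp : periodic_p h.
Proof.
  intros p t. unfold det_C_Cp, Xp, Yp.
  rewrite X_periodic, Y_periodic, !periodic_p_dp by assumption. reflexivity.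
Qed.

Lemma periodic_p_det_Cp_Cpp : periodic_p k.
Proof.
  intros p t. unfold det_Cp_Cpp, Xpp, Ypp, Xp, Yp.
  rewrite !periodic_p_dp by (repeat apply periodic_p_dp; assumption). reflexivity.
Qed.

Lemma periodic_p_cag : periodic_p g.
Proof.
  intros p t. change (sqrt (metric_sq (p + 1) t) = sqrt (metric_sq p t)). unfold metric_sq.
  rewrite periodic_p_det_C_Cp, periodic_p_det_Cp_Cpp. reflexivity.
Qed.

Lemma periodic_p_caphi : periodic_p phi.
Proof.
  assert (HXxi : periodic_p (Xxi X Y)).
  { intros p t. unfold Xxi, Xp. rewrite periodic_p_dp, periodic_p_cag by assumption. reflexivity. }
  assert (HYxi : periodic_p (Yxi X Y)).
  { intros p t. unfold Yxi, Yp. rewrite periodic_p_dp, periodic_p_cag by assumption. reflexivity. }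
  intros p t. unfold caphi, Xxixi, Yxixi.
  rewrite X_periodic, Y_periodic, HXxi, HYxi, !periodic_p_dp, periodic_p_cag by assumption.
  reflexivity.
Qed.

Lemma periodic_p_energy_density : periodic_p energy_density.
Proof.
  intros p t. unfold energy_density. rewrite periodic_p_caphi, periodic_p_cag. reflexivity.
Qed.

Lemma periodic_p_energy_flux : periodic_p energy_flux.
Proof.
  intros p t. unfold energy_flux.
  rewrite periodic_p_caphi, periodic_p_cag, periodic_p_dp by exact periodic_p_caphi. reflexivity.
Qed.

Definition energy_on_period t := RInt (fun p => energy_density p t) p0 (p0 + 1).
Definition length_on_period t := RInt (fun p => g p t) p0 (p0 + 1).

Lemma smooth2_energy_density : smooth2 energy_density.
Proof. apply smooth2_mult; [apply smooth2_pow|]; auto with smooth2. Qed.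

Lemma smooth2_energy_flux : smooth2 energy_flux.
Proof. apply smooth2_div; [apply smooth2_mult| |apply cag_neq0]; auto with smooth2. Qed.
#[local] Hint Resolve smooth2_energy_density smooth2_energy_flux : smooth2.

Lemma caE_energy_on_period t : caE X Y t = energy_on_period t.
Proof.
  symmetry. apply (RInt_periodic_shift (fun p => energy_density p t)).
  - intros x. apply smooth2_continuous_p. auto with smooth2.
  - intros x. apply periodic_p_energy_density.
Qed.

Lemma energy_on_period_nonneg t : 0 <= energy_on_period t.
Proof.
  apply RInt_ge_0; [lra | apply ex_RInt_smooth2; auto with smooth2 |].
  intros x _. unfold energy_density. apply Rmult_le_pos; [apply pow2_ge_0 | left; apply cag_pos].
Qed.

Lemma length_on_period_nonneg t : 0 <= length_on_period t.
Proof.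
  apply RInt_ge_0; [lra | apply ex_RInt_smooth2; auto with smooth2 |].
  intros x _. left; apply cag_pos.
Qed.

Lemma is_derive_length_on_period t : is_derive length_on_period t (energy_on_period t / 2).
Proof.
  replace (energy_on_period t / 2) with (RInt (fun p => dt g p t) p0 (p0 + 1)).
  { apply is_derive_RInt_smooth2. auto with smooth2. }
  unfold energy_on_period.
  rewrite (RInt_ext _ (fun p => scal (/ 2) (energy_density p t))).
  - rewrite (RInt_scal (V:=R_CompleteNormedModule)) by (apply ex_RInt_smooth2; auto with smooth2).
    change (/ 2 * RInt (fun p => energy_density p t) p0 (p0 + 1)
            = RInt (fun p => energy_density p t) p0 (p0 + 1) / 2). field.
  - intros x Hx. rewrite Rmin_left, Rmax_right in Hx by lra.
    rewrite dt_cag by assumption. change (g x t * phi x t ^ 2 / 2 = / 2 * energy_density x t).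
    unfold energy_density. field.
Qed.

Lemma energy_on_period_growth t :
  exists d, is_derive energy_on_period t d /\ d <= 4 * energy_on_period t.
Proof.
  exists (RInt (fun p => dt energy_density p t) p0 (p0 + 1)).
  split; [apply is_derive_RInt_smooth2; auto with smooth2|].
  assert (Hflux : RInt (fun p => dp energy_flux p t) p0 (p0 + 1) = 0).
  { change (RInt (Derive (fun q => energy_flux q t)) p0 (p0 + 1) = 0).
    rewrite RInt_Derive.
    - rewrite periodic_p_energy_flux. apply Rminus_diag_eq. reflexivity.
    - intros x _. apply smooth2_ex_derive_p. auto with smooth2.
    - intros x _. apply (smooth2_continuous_p (dp energy_flux)). auto with smooth2. }
  assert (Hscaled : smooth2 (fun p t => 4 * energy_density p t))
    by (apply smooth2_mult; [apply smooth2_const | auto with smooth2]).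
  assert (Hsum : RInt (fun p => 4 * energy_density p t + dp energy_flux p t) p0 (p0 + 1)
                 = 4 * energy_on_period t).
  { rewrite (RInt_plus (V:=R_CompleteNormedModule) (fun p => 4 * energy_density p t)
      (fun p => dp energy_flux p t)); [| exact (ex_RInt_smooth2 _ _ _ t Hscaled)
                                       | apply ex_RInt_smooth2; auto with smooth2].
    rewrite (RInt_scal (V:=R_CompleteNormedModule) (fun p => energy_density p t))
      by (apply ex_RInt_smooth2; auto with smooth2).
    change (4 * energy_on_period t + RInt (fun p => dp energy_flux p t) p0 (p0 + 1)
            = 4 * energy_on_period t).
    rewrite Hflux. ring. }
  rewrite <- Hsum.
  apply RInt_le; [lra | apply ex_RInt_smooth2; auto with smooth2 | |].
  - apply (ex_RInt_smooth2 (fun p t => 4 * energy_density p t + dp energy_flux p t)).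
    apply smooth2_plus; auto with smooth2.
  - intros x Hx. apply dt_energy_density_le. exact Hx.
Qed.

Lemma caE_is_lim_m_infty : is_lim (caE X Y) m_infty 0.
Proof.
  apply (is_lim_ext energy_on_period); [intros; symmetry; apply caE_energy_on_period|].
  apply (is_lim_m_infty_of_growth energy_on_period (fun t => 2 * length_on_period t) 4 0);
    [lra | | | |].
  - intros t. replace (energy_on_period t) with (2 * (energy_on_period t / 2)) by field.
    apply is_derive_scal, is_derive_length_on_period.
  - intros t. pose proof (length_on_period_nonneg t). lra.
  - apply energy_on_period_nonneg.
  - apply energy_on_period_growth.
Qed.

End CentroAffineCurve.

Lemma metric_sq_pos_or_neg X Y : smooth2 X -> smooth2 Y -> nondegenerate X Y ->
  (forall p t, 0 < metric_sq X Y p t) \/ (forall p t, metric_sq X Y p t < 0).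
Proof.
  intros HX HY Hnd.
  set (G := metric_sq X Y).
  assert (Hc : forall p t, continuity_2d_pt G p t)
    by (intros; apply smooth2_continuity_2d, smooth2_metric_sq; assumption).
  assert (Hnz : forall p t, G p t <> 0) by (intros; apply metric_sq_neq0; assumption).
  destruct (Rlt_or_le 0 (G 0 0)) as [H0 | H0].
  - left. intros p t. apply Rnot_le_lt. intros Hle.
    destruct Hle as [Hlt | Heq]; [|exact (Hnz p t Heq)].
    pose proof (continuity_2d_nonzero_neg G p t 0 0 Hc Hnz Hlt). lra.
  - right. intros p t. apply (continuity_2d_nonzero_neg G 0 0); [assumption | assumption |].
    destruct H0 as [Hlt | Heq]; [assumption | exfalso; exact (Hnz 0 0 Heq)].
Qed.

Lemma caE_metric_sq_neg X Y : (forall p t, metric_sq X Y p t < 0) -> forall t, caE X Y t = 0.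
Proof.
  intros Hneg t. unfold caE.
  (* sqrt vanishes on negative reals, hence so do g and the energy density. *)
  rewrite (RInt_ext _ (fun _ => 0)).
  - rewrite RInt_const. exact (scal_zero_r (1 - 0)).
  - intros x _. change (cag X Y x t) with (sqrt (metric_sq X Y x t)).
    rewrite sqrt_neg_0 by (left; apply Hneg). apply Rmult_0_r.
Qed.

Theorem proposition6p6 (lam p0 : R) (X Y : R -> R -> R) :
  smooth2 X -> smooth2 Y ->
  closed_embedded X Y ->
  convex_curves X Y ->
  nondegenerate X Y ->
  ca_flow lam p0 X Y ->
  (exists M : R, forall p t, Rabs (caphi X Y p t) <= M) ->
  is_lim (caE X Y) m_infty 0.
Proof.
  intros X_smooth Y_smooth [C_periodic _] _ nondeg flow _.
  assert (X_periodic : periodic_p X) by (intros p t; apply C_periodic).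
  assert (Y_periodic : periodic_p Y) by (intros p t; apply C_periodic).
  destruct (metric_sq_pos_or_neg X Y X_smooth Y_smooth nondeg) as [Hpos | Hneg].
  - exact (caE_is_lim_m_infty X Y X_smooth Y_smooth nondeg Hpos lam p0 flow X_periodic Y_periodic).
  - apply (is_lim_ext (fun _ => 0)); [|apply is_lim_const].
    intros t. symmetry. apply caE_metric_sq_neg, Hneg.
Qed.
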